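(* Let $a\in\mathbb{R}$, $\gamma\in[0,1]$, $f:\mathbb{N}_a\to\mathbb{R}$, and $\alpha_1,\alpha_2,\beta_1,\beta_2>0$. Then for all $t\in\mathbb{N}_a$, $$\Bigl({}_\gamma\diamondsuit_a^{-\alpha_1,-\beta_1}\bigl({}_\gamma\diamondsuit_a^{-\alpha_2,-\beta_2}f\bigr)\Bigr)(t)=\gamma\bigl({}_\gamma\diamondsuit_a^{-(\alpha_1+\alpha_2),-(\beta_1+\alpha_2)}f\bigr)(t)+(1-\gamma)\bigl({}_\gamma\diamondsuit_a^{-(\alpha_1+\beta_2),-(\beta_1+\beta_2)}f\bigr)(t).$$
   Context: $\mathbb{N}_a=\{a,a+1,a+2,\dots\}$, $\sigma(s)=s+1$, $\rho(s)=s-1$. Falling factorial $x^{(y)}:=\Gamma(x+1)/\Gamma(x+1-y)$; rising factorial $x^{\overline{y}}:=\Gamma(x+y)/\Gamma(x)$. For $g:\mathbb{N}_a\to\mathbb{R}$ and $\alpha>0$: $(\Delta_a^{-\alpha}g)(t+\alpha)=\frac{1}{\Gamma(\alpha)}\sum_{s=a}^{t}(t+\alpha-\sigma(s))^{(\alpha-1)}g(s)$ and $(\nabla_a^{-\beta}g)(t)=\frac{1}{\Gamma(\beta)}\sum_{s=a}^{t}(t-\rho(s))^{\overline{\beta-1}}g(s)$, $t\in\mathbb{N}_a$. The diamond-$\gamma$ fractional operator of order $(\alpha,\beta)$ is $({}_\gamma\diamondsuit_a^{-\alpha,-\beta}g)(t)=\gamma(\Delta_a^{-\alpha}g)(t+\alpha)+(1-\gamma)(\nabla_a^{-\beta}g)(t)$,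 a function on $\mathbb{N}_a$. *)

From Stdlib Require Import Arith Factorial Reals Rprod ClassicalEpsilon.
Open Scope R_scope.

(* Gamma function for x > 0, via Gauss's limit definition:
   Gamma x = lim_{n->oo} n! n^x / (x (x+1) ... (x+n)).
   (Only used at positive arguments; its value elsewhere is irrelevant.) *)
Definition gauss_seq (x : R) (n : nat) : R :=
  INR (fact n) * Rpower (INR n) x / prod_f_R0 (fun i => x + INR i) n.

Definition Gamma (x : R) : R :=
  epsilon (inhabits 0) (fun l => Un_cv (gauss_seq x) l).

Definition falling (x y : R) : R := Gamma (x + 1) / Gamma (x + 1 - y).
Definition rising (x y : R) : R := Gamma (x + y) / Gamma x.

Definition sigma (s : R) : R := s + 1.
Definition rho (s : R) : R := s - 1.

(* A function g : N_a -> R is represented as g : nat -> R, with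
   g k standing for the value at the point a + k of N_a. *)

(* (Delta_a^{-alpha} g)(t + alpha), at t = a + k *)
Definition DeltaInv (a alpha : R) (g : nat -> R) (k : nat) : R :=
  / Gamma alpha *
  sum_f_R0 (fun j => falling ((a + INR k) + alpha - sigma (a + INR j)) (alpha - 1) * g j) k.

(* (nabla_a^{-beta} g)(t), at t = a + k *)
Definition NablaInv (a beta : R) (g : nat -> R) (k : nat) : R :=
  / Gamma beta *
  sum_f_R0 (fun j => rising ((a + INR k) - rho (a + INR j)) (beta - 1) * g j) k.

Definition diamond (gam a alpha beta : R) (g : nat -> R) (k : nat) : R :=
  gam * DeltaInv a alpha g k + (1 - gam) * NablaInv a beta g k.

(* For an order x > 0, the delta and the nabla fractional sums of g at the
   point a + k are the same discrete convolution  sum_(j <= k) kernel x (k - j) * g j,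
   with  kernel x n = x (x + 1) ... (x + n - 1) / n! = Gamma (n + x) / (Gamma x * n!).
   Hence the diamond operator of order (x, y) is  gam * K_x g + (1 - gam) * K_y g,
   where K_x is convolution with kernel x.  The kernels satisfy the
   Chu-Vandermonde identity  kernel x * kernel y = kernel (x + y), so by
   associativity  K_x (K_y g) = K_(x+y) g; expanding the nested diamond operator
   by linearity then gives the theorem through a ring identity in gam. *)

From Pilot Require Import Defs.
From Stdlib Require Import Reals Factorial Lra Lia ClassicalEpsilon.
Open Scope R_scope.

Lemma exp_le_compat x y : x <= y -> exp x <= exp y.
Proof. intros [H|H]; [left; apply exp_increasing, H | rewrite H; lra]. Qed.

Lemma ln_ratio_le a b : 0 < a -> 0 < b -> ln b - ln a <= b / a - 1.
Proof.
  intros Ha Hb.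
  assert (Hq : 0 < b / a) by (apply Rdiv_lt_0_compat; lra).
  replace (ln b - ln a) with (ln (b / a))
    by (unfold Rdiv; rewrite ln_mult, ln_Rinv by (auto; apply Rinv_0_lt_compat; lra); ring).
  pose proof (exp_ineq1_le (ln (b / a))) as H. rewrite exp_ln in H by exact Hq. lra.
Qed.

Definition log_step (m : nat) : R := ln (INR (S m)) - ln (INR m).

Lemma log_step_bounds m : (1 <= m)%nat -> / INR (S m) <= log_step m <= / INR m.
Proof.
  intros Hm. unfold log_step. rewrite S_INR.
  assert (1 <= INR m) by (apply (le_INR 1); exact Hm).
  pose proof (ln_ratio_le (INR m) (INR m + 1)) as Hup.
  pose proof (ln_ratio_le (INR m + 1) (INR m)) as Hlo.
  replace ((INR m + 1) / INR m - 1) with (/ INR m) in Hup by (field; lra).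
  replace (INR m / (INR m + 1) - 1) with (- / (INR m + 1)) in Hlo by (field; lra).
  split; [ specialize (Hlo ltac:(lra) ltac:(lra)) | specialize (Hup ltac:(lra) ltac:(lra)) ]; lra.
Qed.

Section GaussSequence.
Variable x : R.
Hypothesis Hx : 0 < x.

Lemma prod_shift_pos n : 0 < prod_f_R0 (fun i => x + INR i) n.
Proof.
  induction n as [|n IH]; cbn [prod_f_R0].
  - simpl INR; lra.
  - apply Rmult_lt_0_compat; [exact IH|]. pose proof (pos_INR (S n)). lra.
Qed.

Lemma gauss_seq_pos n : 0 < gauss_seq x n.
Proof.
  unfold gauss_seq, Rdiv, Rpower.
  apply Rmult_lt_0_compat; [apply Rmult_lt_0_compat|].
  - apply lt_0_INR, lt_O_fact.
  - apply exp_pos.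
  - apply Rinv_0_lt_compat, prod_shift_pos.
Qed.

Definition gauss_ratio (m : nat) : R := INR (S m) / (x + INR (S m)) * exp (x * log_step m).

Lemma gauss_seq_S m : (1 <= m)%nat -> gauss_seq x (S m) = gauss_seq x m * gauss_ratio m.
Proof.
  intros Hm. unfold gauss_seq, gauss_ratio, Rpower, log_step.
  change (prod_f_R0 (fun i => x + INR i) (S m))
    with (prod_f_R0 (fun i => x + INR i) m * (x + INR (S m))).
  rewrite fact_simpl, mult_INR.
  replace (x * ln (INR (S m))) with (x * ln (INR m) + x * (ln (INR (S m)) - ln (INR m))) by ring.
  rewrite exp_plus.
  pose proof (prod_shift_pos m). pose proof (pos_INR (S m)).
  field. split; lra.
Qed.

(* The sequence increases from n = 1 on: exp (x ln ((m+1)/m)) >= 1 + x / (m + 1). *)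
Lemma gauss_ratio_ge1 m : (1 <= m)%nat -> 1 <= gauss_ratio m.
Proof.
  intros Hm. unfold gauss_ratio.
  destruct (log_step_bounds m Hm) as [Hlo _].
  pose proof (lt_0_INR (S m) ltac:(lia)) as HS.
  assert (He : (x + INR (S m)) / INR (S m) <= exp (x * log_step m)).
  { pose proof (exp_ineq1_le (x * log_step m)).
    assert (x * / INR (S m) <= x * log_step m) by (apply Rmult_le_compat_l; lra).
    replace ((x + INR (S m)) / INR (S m)) with (1 + x * / INR (S m)) by (field; lra). lra. }
  apply Rle_trans with (INR (S m) / (x + INR (S m)) * ((x + INR (S m)) / INR (S m))).
  - right. field. lra.
  - apply Rmult_le_compat_l; [apply Rlt_le, Rdiv_lt_0_compat|]; lra.
Qed.

(* The sequence multiplied by exp (x (1 + x) / m) decreases, which bounds it from above. *)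
Lemma gauss_ratio_le m : (1 <= m)%nat ->
  gauss_ratio m * exp (x * (1 + x) / INR (S m)) <= exp (x * (1 + x) / INR m).
Proof.
  intros Hm. unfold gauss_ratio.
  destruct (log_step_bounds m Hm) as [_ Hup].
  assert (HM : 1 <= INR m) by (apply (le_INR 1); exact Hm).
  rewrite S_INR in *.
  assert (Hfrac : (INR m + 1) / (x + (INR m + 1)) <= exp (- (x / (x + (INR m + 1))))).
  { pose proof (exp_ineq1_le (- (x / (x + (INR m + 1))))).
    replace ((INR m + 1) / (x + (INR m + 1))) with (1 + - (x / (x + (INR m + 1))))
      by (field; lra). lra. }
  assert (Hexp : exp (x * log_step m) <= exp (x * / INR m))
    by (apply exp_le_compat, Rmult_le_compat_l; lra).
  eapply Rle_trans.
  { apply Rmult_le_compat_r; [apply Rlt_le, exp_pos|].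
    apply Rmult_le_compat; [apply Rlt_le, Rdiv_lt_0_compat; lra | apply Rlt_le, exp_pos
                           | exact Hfrac | exact Hexp]. }
  rewrite <- !exp_plus. apply exp_le_compat.
  assert (Hgap : 0 <= x * (x + 1) * x / (INR m * (INR m + 1) * (x + (INR m + 1)))).
  { apply Rmult_le_pos; [apply Rmult_le_pos; [apply Rmult_le_pos|]; lra|].
    apply Rlt_le, Rinv_0_lt_compat, Rmult_lt_0_compat; [apply Rmult_lt_0_compat|]; lra. }
  replace (x * (1 + x) / INR m) with
    (- (x / (x + (INR m + 1))) + x * / INR m + x * (1 + x) / (INR m + 1)
     + x * (x + 1) * x / (INR m * (INR m + 1) * (x + (INR m + 1)))) by (field; lra).
  lra.
Qed.

Lemma gauss_seq_bounded p :
  gauss_seq x (S p) * exp (x * (1 + x) / INR (S p)) <= gauss_seq x 1 * exp (x * (1 + x) / INR 1).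
Proof.
  induction p as [|p IH]; [lra|].
  eapply Rle_trans; [|exact IH].
  rewrite gauss_seq_S by lia. rewrite Rmult_assoc.
  apply Rmult_le_compat_l; [apply Rlt_le, gauss_seq_pos|].
  apply gauss_ratio_le. lia.
Qed.

Lemma gauss_seq_cv : exists l, 0 < l /\ Un_cv (gauss_seq x) l.
Proof.
  set (u n := gauss_seq x (n + 1)).
  assert (Hgrow : Un_growing u).
  { intros n. unfold u. replace (S n + 1)%nat with (S (n + 1)) by lia.
    rewrite gauss_seq_S by lia.
    pose proof (gauss_ratio_ge1 (n + 1) ltac:(lia)). pose proof (gauss_seq_pos (n + 1)).
    rewrite <- (Rmult_1_r (gauss_seq x (n + 1))) at 1.
    apply Rmult_le_compat_l; lra. }
  assert (Hub : has_ub u).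
  { exists (gauss_seq x 1 * exp (x * (1 + x) / INR 1)).
    intros r [n ->]. unfold u. rewrite Nat.add_1_r.
    eapply Rle_trans; [|apply gauss_seq_bounded].
    pose proof (gauss_seq_pos (S n)).
    assert (0 <= x * (1 + x) / INR (S n)).
    { apply Rmult_le_pos; [apply Rmult_le_pos; lra|].
      apply Rlt_le, Rinv_0_lt_compat, lt_0_INR; lia. }
    pose proof (exp_ineq1_le (x * (1 + x) / INR (S n))).
    rewrite <- (Rmult_1_r (gauss_seq x (S n))) at 1.
    apply Rmult_le_compat_l; lra. }
  destruct (growing_cv u Hgrow Hub) as [l Hl].
  exists l. split.
  - pose proof (growing_ineq u l Hgrow Hl 0) as H0. change (gauss_seq x 1 <= l) in H0.
    pose proof (gauss_seq_pos 1). lra.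
  - exact (CV_shift _ 1 l Hl).
Qed.

Lemma prod_shift_succ n :
  x * prod_f_R0 (fun i => x + 1 + INR i) n = prod_f_R0 (fun i => x + INR i) n * (x + INR (S n)).
Proof.
  induction n as [|n IH]; [simpl; ring|].
  cbn [prod_f_R0]. rewrite <- Rmult_assoc, IH, !S_INR. ring.
Qed.

Lemma gauss_seq_succ_arg n : (1 <= n)%nat ->
  gauss_seq (x + 1) n = gauss_seq x n * (x * (INR n / (x + 1 + INR n))).
Proof.
  intros Hn. unfold gauss_seq.
  assert (HN : 0 < INR n) by (apply lt_0_INR; lia).
  rewrite Rpower_plus, Rpower_1 by exact HN.
  pose proof (prod_shift_pos n).
  replace (prod_f_R0 (fun i => x + 1 + INR i) n)
    with (prod_f_R0 (fun i => x + INR i) n * (x + INR (S n)) / x)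
    by (rewrite <- prod_shift_succ; field; lra).
  rewrite S_INR. field. repeat split; lra.
Qed.

End GaussSequence.

Lemma Gamma_spec x : 0 < x -> 0 < Gamma x /\ Un_cv (gauss_seq x) (Gamma x).
Proof.
  intros Hx. destruct (gauss_seq_cv x Hx) as [l [Hl Hcv]].
  assert (H : Un_cv (gauss_seq x) (Gamma x)) by (unfold Gamma; apply epsilon_spec; eauto).
  split; [rewrite (UL_sequence _ _ _ H Hcv); exact Hl | exact H].
Qed.

Lemma cv_const c : Un_cv (fun _ => c) c.
Proof. intros eps He. exists 0%nat. intros n _. unfold Rdist. rewrite Rminus_diag, Rabs_R0. exact He. Qed.

(* x * n / (c + n) tends to x; this ratio links the Gauss sequences at
   x and x + 1, and gives the Gauss sequence at 1. *)
Lemma cv_scaled_ratio x c : 0 < c -> Un_cv (fun n => x * (INR n / (c + INR n))) x.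
Proof.
  intros Hc.
  assert (Hinf : cv_infty (fun n => c + INR n)).
  { intros M. destruct (INR_unbounded M) as [N HN]. exists N.
    intros n Hn. pose proof (le_INR _ _ Hn). lra. }
  assert (H : Un_cv (fun n => x - x * c * / (c + INR n)) (x - x * c * 0)).
  { apply CV_minus; [apply cv_const | apply CV_mult; [apply cv_const | exact (cv_infty_cv_0 _ Hinf)]]. }
  rewrite Rmult_0_r, Rminus_0_r in H.
  apply Un_cv_ext with (2 := H). intros n.
  pose proof (pos_INR n). field. lra.
Qed.

Lemma Gamma_succ x : 0 < x -> Gamma (x + 1) = x * Gamma x.
Proof.
  intros Hx.
  destruct (Gamma_spec x Hx) as [_ Hcv].
  destruct (Gamma_spec (x + 1) ltac:(lra)) as [_ Hcv1].
  assert (H : Un_cv (gauss_seq (x + 1)) (Gamma x * x)).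
  { apply (CV_shift _ 1).
    apply Un_cv_ext with (fun n => gauss_seq x (n + 1) * (x * (INR (n + 1) / (x + 1 + INR (n + 1))))).
    { intros n. symmetry. apply gauss_seq_succ_arg; [exact Hx | lia]. }
    apply CV_mult; [exact (CV_shift' _ 1 _ Hcv) | exact (CV_shift' _ 1 _ (cv_scaled_ratio x (x + 1) ltac:(lra)))]. }
  rewrite (UL_sequence _ _ _ Hcv1 H). ring.
Qed.

Lemma prod_one_shift m : prod_f_R0 (fun i => 1 + INR i) m = INR (fact (S m)).
Proof.
  induction m as [|m IH]; [simpl; ring|].
  cbn [prod_f_R0]. rewrite IH, (fact_simpl (S m)), mult_INR, (S_INR (S m)). ring.
Qed.

(* Gamma 1 = 1: the Gauss sequence at 1 is n / (n + 1). *)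
Lemma Gamma_1 : Gamma 1 = 1.
Proof.
  destruct (Gamma_spec 1 ltac:(lra)) as [_ Hcv].
  assert (H : Un_cv (gauss_seq 1) 1).
  { apply (CV_shift _ 1).
    apply Un_cv_ext with (fun n => 1 * (INR (n + 1) / (1 + INR (n + 1)))).
    { intros n. unfold gauss_seq. rewrite Rpower_1 by (apply lt_0_INR; lia).
      rewrite prod_one_shift, fact_simpl, mult_INR, S_INR.
      pose proof (lt_0_INR _ (lt_O_fact (n + 1))). pose proof (pos_INR (n + 1)).
      field. split; lra. }
    exact (CV_shift' _ 1 _ (cv_scaled_ratio 1 1 ltac:(lra))). }
  exact (UL_sequence _ _ _ Hcv H).
Qed.

(* The fractional sum kernel  kernel x n = x (x + 1) ... (x + n - 1) / n!,
   the n-th Taylor coefficient of (1 - z)^(-x). *)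
Fixpoint kernel (x : R) (n : nat) : R :=
  match n with
  | O => 1
  | S m => kernel x m * (x + INR m) / INR (S m)
  end.

Lemma kernel_succ x n : INR (S n) * kernel x (S n) = (x + INR n) * kernel x n.
Proof. cbn [kernel]. field. apply not_0_INR. discriminate. Qed.

Lemma kernel_Gamma x n : 0 < x -> / Gamma x * (Gamma (INR n + x) / Gamma (INR n + 1)) = kernel x n.
Proof.
  intros Hx. destruct (Gamma_spec x Hx) as [Gx _].
  induction n as [|n IH].
  - simpl INR. rewrite !Rplus_0_l, Gamma_1. simpl. field. lra.
  - pose proof (pos_INR n).
    destruct (Gamma_spec (INR n + x) ltac:(lra)) as [Gnx _].
    destruct (Gamma_spec (INR n + 1) ltac:(lra)) as [Gn1 _].
    rewrite S_INR. replace (INR n + 1 + x) with (INR n + x + 1) by ring.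
    rewrite Gamma_succ, (Gamma_succ (INR n + 1)) by lra.
    cbn [kernel]. rewrite <- IH, S_INR. field. repeat split; lra.
Qed.

Lemma falling_kernel a x k j : (j <= k)%nat -> 0 < x ->
  / Gamma x * falling (a + INR k + x - Defs.sigma (a + INR j)) (x - 1) = kernel x (k - j).
Proof.
  intros Hjk Hx. unfold falling, Defs.sigma. rewrite <- kernel_Gamma, minus_INR by assumption.
  f_equal. f_equal; f_equal; ring.
Qed.

Lemma rising_kernel a x k j : (j <= k)%nat -> 0 < x ->
  / Gamma x * rising (a + INR k - Defs.rho (a + INR j)) (x - 1) = kernel x (k - j).
Proof.
  intros Hjk Hx. unfold rising, Defs.rho. rewrite <- kernel_Gamma, minus_INR by assumption.
  f_equal. f_equal; f_equal; ring.
Qed.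

From mathcomp Require Import ssreflect ssrfun ssrbool eqtype ssrnat bigop ssralg ssrnum.
From mathcomp Require Import Rstruct ring.
Import GRing.Theory Num.Theory.
Local Open Scope ring_scope.
Set Implicit Arguments.
Unset Strict Implicit.

Section Convolution.
Variable K : comPzRingType.
Implicit Types u v g : nat -> K.

Lemma sum_triangle (F : nat -> nat -> K) k :
  \sum_(0 <= j < k.+1) \sum_(0 <= i < j.+1) F i j =
  \sum_(0 <= i < k.+1) \sum_(0 <= m < (k - i).+1) F i (m + i)%N.
Proof.
  under eq_big_nat => j /andP[_ lt_jk] do rewrite (big_nat_widen _ _ _ _ _ lt_jk).
  rewrite (exchange_big_dep_nat xpredT) //=.
  apply: eq_big_nat => i /andP[_ lt_ik].
  by rewrite -subSn // -(big_addn 0 k.+1 i xpredT (F i)) [RHS](big_nat_widenl _ 0).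
Qed.

Definition conv u v (k : nat) : K := \sum_(0 <= j < k.+1) u (k - j)%N * v j.

(* The index weight  n |-> n * u n  (the coefficient form of z d/dz). *)
Definition nweight u (n : nat) : K := n%:R * u n.

Lemma eq_conv u g1 g2 : g1 =1 g2 -> conv u g1 =1 conv u g2.
Proof. by move=> eq_g k; apply: eq_bigr => j _; rewrite eq_g. Qed.

Lemma conv_linear u (c1 c2 : K) g1 g2 k :
  conv u (fun i => c1 * g1 i + c2 * g2 i) k = c1 * conv u g1 k + c2 * conv u g2 k.
Proof. by rewrite /conv !big_distrr -big_split; apply: eq_bigr => j _ /=; ring. Qed.

Lemma conv_assoc u v g k : conv u (conv v g) k = conv (conv u v) g k.
Proof.
  rewrite /conv; under eq_bigr => j _ do rewrite big_distrr.
  rewrite sum_triangle; apply: eq_bigr => i _; rewrite big_distrl.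
  by apply: eq_bigr => m _ /=; rewrite addnK mulrA addnC subnDA.
Qed.

Lemma conv_comm u v k : conv u v k = conv v u k.
Proof.
  rewrite /conv big_nat_rev; apply: eq_big_nat => j /andP[_ lt_jk].
  by rewrite add0n subSS subKn 1?mulrC // -ltnS.
Qed.

Lemma conv_succ_shift u v k : u 0%N = 0 -> conv u v k.+1 = conv (fun i => u i.+1) v k.
Proof.
  move=> u0; rewrite /conv big_nat_recr //= subnn u0 mul0r addr0.
  by apply: eq_big_nat => j /andP[_ lt_jk]; rewrite subSn // -ltnS.
Qed.

(* Leibniz rule: the index weight is a derivation for convolution,
   since k = (k - j) + j in each term. *)
Lemma nweight_conv u v k : nweight (conv u v) k = conv (nweight u) v k + conv u (nweight v) k.
Proof.
  rewrite /nweight /conv big_distrr -big_split; apply: eq_big_nat => j /andP[_ lt_jk] /=.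
  have le_jk : (j <= k)%N by rewrite -ltnS.
  by rewrite -{1}(subnK le_jk) natrD; ring.
Qed.

(* Recombination of the two Leibniz terms once both weights are affine. *)
Lemma conv_weights u v (a b : K) k :
  conv (fun i => (a + i%:R) * u i) v k + conv u (fun i => (b + i%:R) * v i) k
  = (a + b + k%:R) * conv u v k.
Proof.
  rewrite /conv -big_split big_distrr; apply: eq_big_nat => j /andP[_ lt_jk] /=.
  by rewrite natrB; [ring | rewrite -ltnS].
Qed.

End Convolution.

Lemma sum_f_R0_big (F : nat -> R) k : sum_f_R0 F k = \sum_(0 <= j < k.+1) F j.
Proof. by elim: k => [|k IH]; rewrite ?big_nat1 // big_nat_recr //= -IH. Qed.

Lemma kernel_nweight x n : nweight (kernel x) n.+1 = (x + n%:R) * kernel x n.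
Proof. by rewrite /nweight -!INRE; apply: kernel_succ. Qed.

Lemma conv_nweight_kernel x v k :
  conv (nweight (kernel x)) v k.+1 = conv (fun i => (x + i%:R) * kernel x i) v k.
Proof.
  rewrite conv_succ_shift; last by rewrite /nweight mul0r.
  by apply: eq_bigr => j _ /=; rewrite kernel_nweight.
Qed.

(* Chu-Vandermonde:  kernel x * kernel y = kernel (x + y).  Both sides are 1
   at 0, and the Leibniz rule shows they obey the same recursion. *)
Lemma kernel_conv x y n : conv (kernel x) (kernel y) n = kernel (x + y) n.
Proof.
  elim: n => [|n IH]; first by rewrite /conv big_nat1 /= mulr1.
  apply: (mulfI (x := n.+1%:R)); first by rewrite pnatr_eq0.
  change (nweight (conv (kernel x) (kernel y)) n.+1 = nweight (kernel (x + y)) n.+1).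
  rewrite nweight_conv conv_nweight_kernel [X in _ + X]conv_comm conv_nweight_kernel.
  by rewrite [X in _ + X]conv_comm conv_weights IH kernel_nweight.
Qed.

Lemma weighted_sum_conv (c : R) (w g : nat -> R) x k :
  (forall j, (j <= k)%coq_nat -> c * w j = kernel x (k - j)) ->
  c * sum_f_R0 (fun j => w j * g j) k = conv (kernel x) g k.
Proof.
  move=> cw; rewrite sum_f_R0_big big_distrr; apply: eq_big_nat => j /andP[_ lt_jk] /=.
  by rewrite mulrA cw //; apply/leP; rewrite -ltnS.
Qed.

Lemma DeltaInv_conv a x g k : Rlt 0 x -> DeltaInv a x g k = conv (kernel x) g k.
Proof. by move=> x_gt0; apply: weighted_sum_conv => j le_jk; apply: falling_kernel. Qed.

Lemma NablaInv_conv a x g k : Rlt 0 x -> NablaInv a x g k = conv (kernel x) g k.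
Proof. by move=> x_gt0; apply: weighted_sum_conv => j le_jk; apply: rising_kernel. Qed.

Lemma diamond_conv gam a x y g k : Rlt 0 x -> Rlt 0 y ->
  diamond gam a x y g k = gam * conv (kernel x) g k + (1 - gam) * conv (kernel y) g k.
Proof. by move=> x_gt0 y_gt0; rewrite /diamond DeltaInv_conv // NablaInv_conv. Qed.

Lemma kernel_semigroup x y g k : conv (kernel x) (conv (kernel y) g) k = conv (kernel (x + y)) g k.
Proof. by rewrite conv_assoc; apply: eq_bigr => j _; rewrite kernel_conv. Qed.

Close Scope ring_scope.
Open Scope R_scope.

Theorem mainTheorem14 (a gam : R) (f : nat -> R) (alpha1 alpha2 beta1 beta2 : R) :
  0 <= gam <= 1 ->
  0 < alpha1 -> 0 < alpha2 -> 0 < beta1 -> 0 < beta2 ->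
  forall k : nat,
    diamond gam a alpha1 beta1 (diamond gam a alpha2 beta2 f) k =
    gam * diamond gam a (alpha1 + alpha2) (beta1 + alpha2) f k
    + (1 - gam) * diamond gam a (alpha1 + beta2) (beta1 + beta2) f k.
Proof.
  move=> _ ha1 ha2 hb1 hb2 k.
  have inner i := diamond_conv gam a f i ha2 hb2.
  rewrite diamond_conv // !(eq_conv _ inner) !conv_linear !kernel_semigroup.
  rewrite !diamond_conv; try exact: Rplus_lt_0_compat.
  rewrite !RmultE !RplusE !RminusE R1E; ring.
Qed.
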